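(* There is an absolute constant $C>0$ such that the following holds. Let $S$ and $T$ be valid configurations of $n\ge 2$ points each whose smallest enclosing discs have the same center. Then there exists a translation $\vec v$ such that the unlabeled problem from $S$ to $T+\vec v$ is feasible, $|\vec v|\le C\,(r(S)+r(T))\,n$, and $r(S\cup(T+\vec v))\le C\,(r(S)+r(T))\,n$.
   Context: For $p\in\mathbb R^2$, $D(p)$ is the open unit disc centered at $p$. A configuration is a finite set of points in $\mathbb R^2$; it is valid if any two distinct points are at distance at least $2$. $r(P)$ is the radius of the smallest closed disc containing the point set $P$. The unlabeled problem from $S$ to $T'$ is feasible if there exist a bijection $M:S\to T'$ and an ordering $s_1,\dots,s_n$ of $S$ such that for each $i$ the region $\mathrm{conv}(D(s_i)\cup D(M(s_i)))$ swept by translating $D(s_i)$ straight to $M(s_i)$ is disjoint from $D(s_j)$ for all $j>i$ and from $D(M(s_j))$ for all $j<i$. *)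

From Stdlib Require Import Reals Lra List Permutation.
From Coquelicot Require Import Coquelicot.
Open Scope R_scope.

Definition point := (R * R)%type.

Definition dist2 (p q : point) : R :=
  sqrt ((fst p - fst q) ^ 2 + (snd p - snd q) ^ 2).

Definition padd (p q : point) : point := (fst p + fst q, snd p + snd q).
Definition pscale (a : R) (p : point) : point := (a * fst p, a * snd p).

Definition D (p : point) (q : point) : Prop := dist2 q p < 1.

Definition convex_set (K : point -> Prop) : Prop :=
  forall x y lam, K x -> K y -> 0 <= lam <= 1 ->
    K (padd (pscale lam x) (pscale (1 - lam) y)).
Definition conv (A : point -> Prop) (q : point) : Prop :=
  forall K, convex_set K -> (forall x, A x -> K x) -> K q.

Definition swept (s t : point) : point -> Prop :=
  conv (fun q => D s q \/ D t q).

Definition disjoint (A B : point -> Prop) : Prop := forall q, ~ (A q /\ B q).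

Definition valid (P : list point) : Prop :=
  forall i j, (i < length P)%nat -> (j < length P)%nat -> i <> j ->
    dist2 (nth i P (0,0)) (nth j P (0,0)) >= 2.

(* r(P): radius of the smallest closed disc containing P (infimum of
   radii of enclosing closed discs; attained for finite P). *)
Definition r (P : list point) : R :=
  real (Glb_Rbar (fun rho => exists c : point,
          forall p, In p P -> dist2 p c <= rho)).

Definition sed_center (P : list point) (c : point) : Prop :=
  forall p, In p P -> dist2 p c <= r P.

Definition translate (P : list point) (v : point) : list point :=
  map (fun p => padd p v) P.

(* unlabeled problem from S to T' is feasible: there is an ordering
   s_1..s_n of S (ord) and a bijection M given by M(s_i) = tgt_i, where
   tgt is an ordering of T'. *)
Definition feasible (S T' : list point) : Prop :=
  exists ord tgt : list point,
    Permutation ord S /\ Permutation tgt T' /\ length ord = length tgt /\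
    forall i, (i < length ord)%nat ->
      (forall j, (i < j < length ord)%nat ->
          disjoint (swept (nth i ord (0,0)) (nth i tgt (0,0))) (D (nth j ord (0,0)))) /\
      (forall j, (j < i)%nat ->
          disjoint (swept (nth i ord (0,0)) (nth i tgt (0,0))) (D (nth j tgt (0,0)))).

Definition norm2 (v : point) : R := dist2 v (0,0).

(* Let R0 = r(S) + r(T); every start s and every target t lie within R0 of
   the common center, so |t - s| <= R0.  Pick a direction u = (1, m), m in [0,1],
   and translate T far along u: v = L u with L ~ R0 n.  Sort S and T by the
   linear key <p, u> (decreasing) and send the i-th start to the i-th target.
   The disc moving from s_i to t_i + v travels essentially along u, so it moves
   away from the later starts s_j (which are "behind" s_i) and towards the earlier
   targets t_j + v only from "behind" them.  The only danger comes from pairs of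
   points at distance < 5/2 whose difference is almost orthogonal to u; by a
   packing argument there are at most 32 n such difference vectors, and each one
   excludes at most one of the 32 n + 1 slopes m = k / (32 n), so a good slope
   exists. *)

From Stdlib Require Import Reals Lra Psatz List Permutation Sorted ZArith Classical.
From Coquelicot Require Import Coquelicot.
Open Scope R_scope.

Definition dot (a b : point) : R := fst a * fst b + snd a * snd b.
Definition nsq (a : point) : R := dot a a.
Definition diff (q p : point) : point := (fst q - fst p, snd q - snd p).

Definition sqd (p q : point) : R := nsq (diff p q).

Lemma sqnn (x : R) : 0 <= x * x.
Proof. apply Rle_0_sqr. Qed.

Lemma nsq_nn a : 0 <= nsq a.
Proof. unfold nsq, dot. pose proof (sqnn (fst a)). pose proof (sqnn (snd a)). lra. Qed.

Lemma dist2_sqd p q : dist2 p q = sqrt (sqd p q).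
Proof. unfold dist2, sqd, nsq, dot, diff; simpl. f_equal. ring. Qed.

Lemma dist2_nn p q : 0 <= dist2 p q.
Proof. apply sqrt_pos. Qed.

Lemma dist2_sym p q : dist2 p q = dist2 q p.
Proof. unfold dist2. f_equal. ring. Qed.

Lemma D_sq p q : D p q <-> sqd q p < 1.
Proof.
  unfold D. rewrite dist2_sqd. pose proof (nsq_nn (diff q p)). split; intro h.
  - destruct (Rlt_or_le (sqd q p) 1) as [h'|h']; auto.
    apply sqrt_le_1_alt in h'. rewrite sqrt_1 in h'. lra.
  - rewrite <- sqrt_1. apply sqrt_lt_1_alt. split; [apply nsq_nn | exact h].
Qed.

Lemma dist2_ge2 p q : dist2 p q >= 2 -> 4 <= sqd p q.
Proof.
  rewrite dist2_sqd. intro h. pose proof (nsq_nn (diff p q)).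
  destruct (Rlt_or_le (sqd p q) 4) as [h'|h']; auto.
  assert (Hlt : sqrt (sqd p q) < sqrt (2 * 2)) by (apply sqrt_lt_1_alt; unfold sqd in *; split; lra).
  rewrite sqrt_square in Hlt; lra.
Qed.

Lemma sqd_le_of_dist p q rho : dist2 p q <= rho -> sqd p q <= rho * rho.
Proof.
  intro h. pose proof (dist2_nn p q). rewrite dist2_sqd in *.
  rewrite <- (sqrt_sqrt (sqd p q)) by apply nsq_nn. nra.
Qed.

Lemma dot_le a b : dot a b <= sqrt (nsq a) * sqrt (nsq b).
Proof.
  pose proof (nsq_nn a) as Ha; pose proof (nsq_nn b) as Hb.
  pose proof (sqrt_pos (nsq a)); pose proof (sqrt_pos (nsq b)).
  destruct (Rle_or_lt (dot a b) 0); [nra|].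
  assert (CS : dot a b * dot a b <= nsq a * nsq b).
  { unfold nsq, dot. pose proof (sqnn (fst a * snd b - snd a * fst b)). nra. }
  assert (E : sqrt (nsq a) * sqrt (nsq b) * (sqrt (nsq a) * sqrt (nsq b)) = nsq a * nsq b).
  { rewrite <- sqrt_mult by auto. apply sqrt_sqrt. nra. }
  set (k := sqrt (nsq a) * sqrt (nsq b)) in *.
  assert (0 <= k) by (apply Rmult_le_pos; auto).
  destruct (Rle_or_lt (dot a b) k) as [|hgt]; auto.
  assert (k * k < dot a b * dot a b) by (apply Rmult_le_0_lt_compat; lra).
  lra.
Qed.

Lemma dist2_tri p c q : dist2 p q <= dist2 p c + dist2 c q.
Proof.
  rewrite !dist2_sqd. unfold sqd.
  set (a := diff p c). set (b := diff c q).
  assert (E : nsq (diff p q) = nsq a + nsq b + 2 * dot a b)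
    by (unfold a, b, nsq, dot, diff; simpl; ring).
  pose proof (dot_le a b). pose proof (nsq_nn a); pose proof (nsq_nn b).
  pose proof (sqrt_pos (nsq a)); pose proof (sqrt_pos (nsq b)).
  rewrite E, <- (sqrt_square (sqrt (nsq a) + sqrt (nsq b))) by lra.
  apply sqrt_le_1_alt.
  replace ((sqrt (nsq a) + sqrt (nsq b)) * (sqrt (nsq a) + sqrt (nsq b))) with
    (sqrt (nsq a) * sqrt (nsq a) + sqrt (nsq b) * sqrt (nsq b)
     + 2 * (sqrt (nsq a) * sqrt (nsq b))) by ring.
  rewrite !sqrt_sqrt; lra.
Qed.

(** The swept region lies in the open unit neighbourhood of the segment. *)

Definition pt (s t : point) (mu : R) : point :=
  (fst s + mu * (fst t - fst s), snd s + mu * (snd t - snd s)).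

Definition tube (s t : point) (q : point) : Prop :=
  exists mu, 0 <= mu <= 1 /\ sqd q (pt s t mu) < 1.

Lemma tube_convex s t : convex_set (tube s t).
Proof.
  intros x y lam [m1 [Hm1 H1]] [m2 [Hm2 H2]] Hl.
  exists (lam * m1 + (1 - lam) * m2). split; [split; nra|].
  unfold sqd in *. set (a := diff x (pt s t m1)) in H1. set (b := diff y (pt s t m2)) in H2.
  replace (diff (padd (pscale lam x) (pscale (1 - lam) y)) (pt s t (lam * m1 + (1 - lam) * m2)))
    with (padd (pscale lam a) (pscale (1 - lam) b))
    by (unfold a, b, diff, padd, pscale, pt; simpl; f_equal; ring).
  assert (E : nsq (padd (pscale lam a) (pscale (1 - lam) b))
              = lam * nsq a + (1 - lam) * nsq b - lam * (1 - lam) * nsq (diff a b))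
    by (unfold nsq, dot, padd, pscale, diff; simpl; ring).
  rewrite E. pose proof (nsq_nn (diff a b)).
  assert (0 <= lam * (1 - lam) * nsq (diff a b)) by (apply Rmult_le_pos; nra).
  destruct (Req_dec lam 0) as [->|]; [lra|].
  assert (lam * nsq a < lam * 1) by (apply Rmult_lt_compat_l; lra).
  assert ((1 - lam) * nsq b <= (1 - lam) * 1) by (apply Rmult_le_compat_l; lra).
  lra.
Qed.

Lemma swept_tube s t q : swept s t q -> tube s t q.
Proof.
  intro h. apply h; [apply tube_convex|].
  intros x [hx|hx]; apply D_sq in hx; [exists 0 | exists 1];
    (split; [lra|]); destruct s, t; unfold pt; simpl;
    [replace (r + 0 * (r1 - r)) with r by ring; replace (r0 + 0 * (r2 - r0)) with r0 by ring
    |replace (r + 1 * (r1 - r)) with r1 by ring; replace (r0 + 1 * (r2 - r0)) with r2 by ring];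
    exact hx.
Qed.

Lemma disjoint_of_segment s t x :
  (forall mu, 0 <= mu <= 1 -> 4 <= sqd x (pt s t mu)) -> disjoint (swept s t) (D x).
Proof.
  intros H q [h1 h2]. apply swept_tube in h1. destruct h1 as [mu [Hm h1]].
  apply D_sq in h2. specialize (H mu Hm).
  set (a := diff q (pt s t mu)) in h1. set (b := diff q x) in h2.
  replace (sqd x (pt s t mu)) with (nsq (diff a b)) in H
    by (unfold a, b, sqd, nsq, dot, diff; simpl; ring).
  assert (E : nsq (diff a b) + nsq (padd a b) = 2 * nsq a + 2 * nsq b)
    by (unfold nsq, dot, diff, padd; simpl; ring).
  pose proof (nsq_nn (padd a b)). unfold sqd in h1, h2. fold a in h1. fold b in h2. lra.
Qed.

(** The disc centred at the origin of [a] moves by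
    [mu d] with displacement [d = L u + w], where [u] is the sweep direction and
    [w] (|w| <= R0) the offset between start and target; [a] is the position of
    an obstacle, which lies weakly behind the motion (<a, u> <= 0). *)

(* close obstacle: the component of the motion along [a] is never positive *)
Lemma clearance_close a u w L eta R0 mu :
  4 <= nsq a -> dot a u <= - eta -> nsq a < 25/4 ->
  nsq w <= R0 * R0 -> 0 <= R0 -> 5/2 * R0 <= L * eta -> 0 <= L -> 0 <= mu <= 1 ->
  4 <= nsq (diff a (pscale mu (padd (pscale L u) w))).
Proof.
  destruct a as [ax ay], u as [ux uy], w as [wx wy].
  unfold nsq, dot, diff, pscale, padd; simpl.
  intros H1 H2 H3 H4 H5 H6 HL H7.
  assert (CS : (ax*wx+ay*wy)*(ax*wx+ay*wy) <= (ax*ax+ay*ay)*(wx*wx+wy*wy)).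
  { assert (0 <= (ax*wy-ay*wx)*(ax*wy-ay*wx)) by apply sqnn. nra. }
  assert (Hd : ax*wx+ay*wy <= 5/2*R0).
  { destruct (Rle_or_lt (ax*wx+ay*wy) (5/2*R0)) as [h|h]; auto.
    exfalso. assert (0 <= ax*ax+ay*ay) by nra.
    assert ((ax*ax+ay*ay)*(wx*wx+wy*wy) <= 25/4*(R0*R0)) by nra. nra. }
  assert (Hdot : ax*(L*ux+wx)+ay*(L*uy+wy) <= 0).
  { replace (ax*(L*ux+wx)+ay*(L*uy+wy)) with (L*(ax*ux+ay*uy) + (ax*wx+ay*wy)) by ring.
    assert (L*(ax*ux+ay*uy) <= L*(-eta)) by (apply Rmult_le_compat_l; lra).
    nra. }
  set (dx := L*ux+wx) in *. set (dy := L*uy+wy) in *.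
  assert (0 <= mu*mu*(dx*dx+dy*dy)) by (apply Rmult_le_pos; nra).
  nra.
Qed.

(* far obstacle: the motion along -u dominates the bounded offset [w] *)
Lemma clearance_far a u w L R0 mu :
  25/4 <= nsq a -> dot a u <= 0 -> 1 <= nsq u ->
  nsq w <= R0 * R0 -> 0 <= R0 -> 3 * R0 <= L -> 0 <= mu <= 1 ->
  4 <= nsq (diff a (pscale mu (padd (pscale L u) w))).
Proof.
  destruct a as [ax ay], u as [ux uy], w as [wx wy].
  unfold nsq, dot, diff, pscale, padd; simpl.
  intros H1 H2 H3 H4 H5 H6 H7.
  set (bx := ax - mu*L*ux). set (by' := ay - mu*L*uy).
  assert (Hb : 25/4 + mu*mu*(L*L) <= bx*bx+by'*by').
  { unfold bx, by'.
    assert (0 <= mu*L) by nra.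
    assert (0 <= mu*L*(-(ax*ux+ay*uy))) by nra.
    assert (mu*L*(mu*L) <= mu*L*(mu*L)*(ux*ux+uy*uy)) by nra.
    nra. }
  replace (ax - mu*(L*ux+wx)) with (bx - mu*wx) by (unfold bx; ring).
  replace (ay - mu*(L*uy+wy)) with (by' - mu*wy) by (unfold by'; ring).
  assert (2*(bx*(mu*wx)+by'*(mu*wy)) <= 1/4*(bx*bx+by'*by') + 4*(mu*mu)*(wx*wx+wy*wy)).
  { assert (0 <= (1/2*bx - 2*mu*wx)*(1/2*bx - 2*mu*wx)) by apply sqnn.
    assert (0 <= (1/2*by' - 2*mu*wy)*(1/2*by' - 2*mu*wy)) by apply sqnn.
    nra. }
  assert (mu*mu*(wx*wx+wy*wy) <= mu*mu*(R0*R0)) by (apply Rmult_le_compat_l; nra).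
  assert (R0*R0*9 <= L*L) by nra.
  nra.
Qed.

Lemma clearance a u w L eta R0 mu :
  4 <= nsq a -> dot a u <= 0 -> (nsq a < 25/4 -> dot a u <= - eta) -> 1 <= nsq u ->
  nsq w <= R0 * R0 -> 0 <= R0 -> 5/2 * R0 <= L * eta -> 3 * R0 <= L -> 0 <= mu <= 1 ->
  4 <= nsq (diff a (pscale mu (padd (pscale L u) w))).
Proof.
  intros H1 H2 H3 Hu H4 H5 H6 H7 H8.
  destruct (Rlt_or_le (nsq a) (25/4)) as [h|h].
  - apply clearance_close with eta R0; auto; lra.
  - apply clearance_far with R0; auto.
Qed.

Definition behind (a u : point) (eta : R) : Prop :=
  4 <= nsq a /\ dot a u <= 0 /\ (nsq a < 25/4 -> dot a u <= - eta).

Lemma sweep_misses_start s t x u L eta R0 :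
  behind (diff x s) u eta -> 1 <= nsq u -> sqd t s <= R0 * R0 -> 0 <= R0 ->
  5/2 * R0 <= L * eta -> 3 * R0 <= L ->
  disjoint (swept s (padd t (pscale L u))) (D x).
Proof.
  intros [H1 [H2 H3]] Hu Hw HR0 HLe HL. apply disjoint_of_segment. intros mu Hmu.
  replace (sqd x (pt s (padd t (pscale L u)) mu))
    with (nsq (diff (diff x s) (pscale mu (padd (pscale L u) (diff t s)))))
    by (unfold sqd, nsq, dot, diff, pscale, padd, pt; simpl; ring).
  apply clearance with eta R0; auto.
Qed.

Lemma sweep_misses_target s t x u L eta R0 :
  behind (diff t x) u eta -> 1 <= nsq u -> sqd t s <= R0 * R0 -> 0 <= R0 ->
  5/2 * R0 <= L * eta -> 3 * R0 <= L ->
  disjoint (swept s (padd t (pscale L u))) (D (padd x (pscale L u))).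
Proof.
  intros [H1 [H2 H3]] Hu Hw HR0 HLe HL. apply disjoint_of_segment. intros mu Hmu.
  replace (sqd (padd x (pscale L u)) (pt s (padd t (pscale L u)) mu))
    with (nsq (diff (diff t x) (pscale (1 - mu) (padd (pscale L u) (diff t s)))))
    by (unfold sqd, nsq, dot, diff, pscale, padd, pt; simpl; ring).
  apply clearance with eta R0; auto; lra.
Qed.

Fixpoint ins (key : point -> R) (x : point) (l : list point) : list point :=
  match l with
  | nil => x :: nil
  | y :: l' => if Rle_dec (key y) (key x) then x :: l else y :: ins key x l'
  end.

Fixpoint isort (key : point -> R) (l : list point) : list point :=
  match l with nil => nil | x :: l' => ins key x (isort key l') end.

Definition geK (key : point -> R) (a b : point) : Prop := key b <= key a.

Lemma ins_perm key x l : Permutation (ins key x l) (x :: l).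
Proof.
  induction l as [|y l IH]; simpl; auto.
  destruct (Rle_dec (key y) (key x)); auto.
  eapply perm_trans; [apply perm_skip, IH | apply perm_swap].
Qed.

Lemma ins_sorted key x l :
  StronglySorted (geK key) l -> StronglySorted (geK key) (ins key x l).
Proof.
  induction l as [|y l IH]; simpl; intro H; [repeat constructor|].
  inversion H as [|? ? Hl Hy]; subst. destruct (Rle_dec (key y) (key x)) as [h|h].
  - constructor; [exact H|]. constructor; [unfold geK; lra|].
    eapply Forall_impl; [|exact Hy]. unfold geK; intros; lra.
  - constructor; auto. apply Forall_forall. intros z Hz.
    apply (Permutation_in _ (ins_perm key x l)) in Hz. destruct Hz as [<-|Hz].
    + unfold geK; lra.
    + rewrite Forall_forall in Hy; auto.
Qed.

Lemma sort_by_key key l : exists l', Permutation l' l /\ StronglySorted (geK key) l'.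
Proof.
  exists (isort key l). induction l as [|x l [IHp IHs]]; simpl; [split; constructor|].
  split; [eapply perm_trans; [apply ins_perm | auto] | apply ins_sorted; auto].
Qed.

Lemma sorted_nth key l d i j : StronglySorted (geK key) l -> (i < j < length l)%nat ->
  key (nth j l d) <= key (nth i l d).
Proof.
  revert i j. induction l as [|x l IH]; intros i j H Hij; simpl in *; [lia|].
  inversion H as [|? ? Hl Hx]; subst. destruct i as [|i]; destruct j as [|j]; try lia.
  - rewrite Forall_forall in Hx. apply Hx, nth_In. lia.
  - apply IH; auto. lia.
Qed.

(** Packing: in a 2-separated set, a point has at most 16 neighbours at distance
    < 5/2 (itself included), since such neighbours fall in distinct cells of a
    4 x 4 grid of side 5/4 around it. *)

Definition sep (P : list point) : Prop :=
  forall p q, In p P -> In q P -> p <> q -> 4 <= sqd p q.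

Lemma valid_props P : valid P -> NoDup P /\ sep P.
Proof.
  intro Hv. split.
  - apply (NoDup_nth P (0,0)). intros i j Hi Hj He. destruct (Nat.eq_dec i j) as [|n]; auto.
    exfalso. specialize (Hv i j Hi Hj n). rewrite He in Hv. unfold dist2 in Hv.
    replace ((fst (nth j P (0, 0)) - fst (nth j P (0, 0))) ^ 2 +
     (snd (nth j P (0, 0)) - snd (nth j P (0, 0))) ^ 2) with 0 in Hv by ring.
    rewrite sqrt_0 in Hv. lra.
  - intros p q Hp Hq Hne. destruct (In_nth P p (0,0) Hp) as [i [Hi <-]].
    destruct (In_nth P q (0,0) Hq) as [j [Hj <-]]. apply dist2_ge2. apply Hv; auto.
    intros ->. congruence.
Qed.

Definition is_close (p q : point) : bool := if Rlt_dec (sqd q p) (25/4) then true else false.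

(* grid cell of [q] relative to [p]; the cells of points within 5/2 of [p] range in 1..4 *)
Definition cell (p q : point) : Z * Z :=
  (up ((fst q - fst p + 5/2) * (4/5)), up ((snd q - snd p + 5/2) * (4/5))).

Lemma up_range x : 0 < x < 4 -> (1 <= up x <= 4)%Z.
Proof.
  intro h. destruct (archimed x) as [h1 h2]. split.
  - assert (H : 0 < IZR (up x)) by lra. apply lt_IZR in H. lia.
  - assert (H : IZR (up x) < 5) by lra. apply lt_IZR in H. lia.
Qed.

Lemma up_close x y : up x = up y -> x - y < 1 /\ y - x < 1.
Proof.
  intro h. destruct (archimed x) as [h1 h2]. destruct (archimed y) as [h3 h4].
  rewrite h in h1, h2. lra.
Qed.

Lemma coord_bound z w : z * z + w * w < 25/4 -> 0 < (z + 5/2) * (4/5) < 4.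
Proof. intro h. pose proof (sqnn w). assert (z * z < 25/4) by lra. split; nra. Qed.

Lemma in14 z : (1 <= z <= 4)%Z -> In z (1 :: 2 :: 3 :: 4 :: nil)%Z.
Proof. intro h. assert (z = 1 \/ z = 2 \/ z = 3 \/ z = 4)%Z as [e|[e|[e|e]]] by lia; subst z; simpl; auto. Qed.

Lemma NoDup_map_inj_on {A B} (f : A -> B) (l : list A) :
  NoDup l -> (forall x y, In x l -> In y l -> f x = f y -> x = y) -> NoDup (map f l).
Proof.
  induction l as [|a l IH]; simpl; intros Hn Hi; constructor; inversion Hn; subst.
  - intro h. apply in_map_iff in h. destruct h as [x [Hx Hxl]].
    assert (x = a) by (apply Hi; auto). subst; contradiction.
  - apply IH; auto.
Qed.

Lemma packing P p : NoDup P -> sep P -> (length (filter (is_close p) P) <= 16)%nat.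
Proof.
  intros Hn Hs. set (F := filter (is_close p) P).
  assert (HF : forall q, In q F -> In q P /\ sqd q p < 25/4).
  { intros q Hq. apply filter_In in Hq. destruct Hq as [h1 h2]. split; auto.
    unfold is_close in h2. destruct (Rlt_dec (sqd q p) (25/4)); congruence. }
  assert (Hnd : NoDup (map (cell p) F)).
  { apply NoDup_map_inj_on; [apply NoDup_filter; auto|].
    intros x y Hx Hy Hc. apply HF in Hx as [Hx _]. apply HF in Hy as [Hy _].
    apply NNPP. intro hne. specialize (Hs x y Hx Hy hne). unfold cell in Hc.
    injection Hc as Hc1 Hc2. apply up_close in Hc1. apply up_close in Hc2.
    unfold sqd, nsq, dot, diff in Hs; simpl in Hs.
    assert (-5/4 < fst x - fst y < 5/4) by lra.
    assert (-5/4 < snd x - snd y < 5/4) by lra.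
    nra. }
  assert (Hinc : incl (map (cell p) F) (list_prod (1::2::3::4::nil) (1::2::3::4::nil))%Z).
  { intros c Hc. apply in_map_iff in Hc. destruct Hc as [q [<- Hq]]. apply HF in Hq as [_ Hq].
    unfold sqd, nsq, dot, diff in Hq; simpl in Hq.
    apply in_prod; apply in14, up_range.
    - apply (coord_bound _ (snd q - snd p)). lra.
    - apply (coord_bound _ (fst q - fst p)). lra. }
  pose proof (NoDup_incl_length Hnd Hinc) as Hl. rewrite length_map in Hl. exact Hl.
Qed.

Definition close_diffs (P : list point) : list point :=
  flat_map (fun p => map (fun q => diff q p) (filter (is_close p) P)) P.

Lemma close_diffs_in P p q : In p P -> In q P -> sqd q p < 25/4 -> In (diff q p) (close_diffs P).
Proof.
  intros hp hq hd. apply in_flat_map. exists p. split; auto.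
  apply (in_map (fun q0 => diff q0 p)). apply filter_In. split; auto.
  unfold is_close. destruct (Rlt_dec (sqd q p) (25/4)); auto.
Qed.

Lemma close_diffs_length P : NoDup P -> sep P -> (length (close_diffs P) <= 16 * length P)%nat.
Proof.
  intros Hn Hs. unfold close_diffs.
  generalize P at 2 3. intro O.
  induction O as [|o O IH]; simpl; [lia|]. rewrite length_app, length_map.
  pose proof (packing P o Hn Hs). lia.
Qed.

(** Choice of the sweep direction u = (1, m) with m = k / M, 0 <= k <= M.  A vector
    [a] with 2 <= |a| < 5/2 is nearly orthogonal to at most one of these
    directions, so if there are at most M such vectors some direction makes a
    definite angle with all of them. *)

Definition tight (a : point) : Prop := 4 <= nsq a < 25/4.

Definition slope (M k : nat) : R := INR k / INR M.

Definition bad_slope (M : nat) (a : point) (k : nat) : Prop :=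
  Rabs (dot a (1, slope M k)) < 1 / (2 * INR M).

Lemma slope_range M k : (0 < M)%nat -> (k <= M)%nat -> 0 <= slope M k <= 1.
Proof.
  intros HM Hk. unfold slope. apply lt_0_INR in HM. apply le_INR in Hk.
  pose proof (pos_INR k). split.
  - apply Rmult_le_pos; auto. left; apply Rinv_0_lt_compat; auto.
  - apply Rmult_le_reg_r with (INR M); auto. unfold Rdiv. rewrite Rmult_assoc, Rinv_l; lra.
Qed.

Lemma bad_slope_unique M a k1 k2 : (0 < M)%nat -> tight a -> (k1 <= M)%nat -> (k2 <= M)%nat ->
  bad_slope M a k1 -> bad_slope M a k2 -> k1 = k2.
Proof.
  unfold tight, bad_slope, nsq, dot; simpl.
  intros HM [Ht1 Ht2] H1 H2 B1 B2. apply Rabs_def2 in B1, B2.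
  pose proof (slope_range _ _ HM H1). pose proof (slope_range _ _ HM H2).
  assert (HMr : 1 <= INR M) by (apply (le_INR 1); lia).
  set (e := 1 / (2 * INR M)) in *.
  assert (He : 0 < e <= 1/2).
  { unfold e. split; [apply Rdiv_lt_0_compat; lra|].
    apply Rmult_le_reg_r with (2 * INR M); [lra|]. unfold Rdiv. rewrite Rmult_assoc, Rinv_l; lra. }
  set (x := fst a) in *. set (y := snd a) in *.
  destruct (Rlt_or_le (y*y) 1) as [hy|hy].
  - (* |y| < 1 forces |x| > 1.7, too large for |x + m y| < 1/2 *)
    exfalso. set (m := slope M k1) in *.
    assert (Hyy : y < 1 /\ -1 < y) by (split; nra).
    assert (x*x > 3) by lra.
    assert (Hx : x > 17/10 \/ x < -17/10) by (destruct (Rle_or_lt 0 x); [left|right]; nra).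
    destruct Hyy. destruct Hx; nra.
  - (* |y| >= 1 and distinct slopes differ by >= 2e *)
    assert (Hd : -(2*e) < (slope M k1 - slope M k2) * y < 2*e) by (split; nra).
    destruct (Nat.eq_dec k1 k2) as [|hne]; auto. exfalso.
    assert (Hk : 1 <= Rabs (INR k1 - INR k2)).
    { destruct (Nat.lt_ge_cases k1 k2) as [h|h].
      - assert (h' : INR (S k1) <= INR k2) by (apply le_INR; lia).
        rewrite S_INR in h'. rewrite Rabs_left1; lra.
      - assert (h' : INR (S k2) <= INR k1) by (apply le_INR; lia).
        rewrite S_INR in h'. rewrite Rabs_right; lra. }
    assert (Em : slope M k1 - slope M k2 = (INR k1 - INR k2) * (2*e)) by (unfold slope, e; field; lra).
    rewrite Em in Hd.
    assert (1 <= Rabs y) by (destruct (Rle_or_lt 0 y); [rewrite Rabs_right|rewrite Rabs_left]; nra).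
    assert (H5 : Rabs ((INR k1 - INR k2) * (2 * e) * y) < 2*e) by (apply Rabs_def1; lra).
    rewrite !Rabs_mult, (Rabs_right 2), (Rabs_right e) in H5 by lra.
    assert (1 <= Rabs (INR k1 - INR k2) * Rabs y) by nra. nra.
Qed.

Lemma bad_slopes_list M A : (0 < M)%nat -> exists l, (length l <= length A)%nat /\
  forall a, In a A -> forall k, (k <= M)%nat -> tight a -> bad_slope M a k -> In k l.
Proof.
  intro HM. induction A as [|a A [l [Hl Hc]]].
  - exists nil. simpl. split; [lia|tauto].
  - destruct (classic (exists k, (k <= M)%nat /\ tight a /\ bad_slope M a k))
      as [[k0 [Hk0 [Ht Hb]]]|hn].
    + exists (k0 :: l). simpl. split; [lia|]. intros b [<-|Hb'] k Hk Htb Hbb.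
      * left. symmetry. eapply bad_slope_unique; eauto.
      * right. eauto.
    + exists l. simpl. split; [lia|]. intros b [<-|Hb'] k Hk Htb Hbb.
      * exfalso. apply hn. eauto.
      * eauto.
Qed.

Lemma index_avoiding M (l : list nat) : (length l < S M)%nat -> exists k, (k <= M)%nat /\ ~ In k l.
Proof.
  intro Hl. apply NNPP. intro hn.
  assert (Hinc : incl (seq 0 (S M)) l).
  { intros k Hk. apply in_seq in Hk. apply NNPP. intro h. apply hn. exists k. split; [lia|auto]. }
  pose proof (NoDup_incl_length (seq_NoDup (S M) 0) Hinc). rewrite length_seq in *. lia.
Qed.

Lemma good_slope (A : list point) M : (0 < M)%nat -> (length A <= M)%nat ->
  exists m, 0 <= m <= 1 /\
    forall a, In a A -> tight a -> 1 / (2 * INR M) <= Rabs (dot a (1, m)).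
Proof.
  intros HM HA. destruct (bad_slopes_list M A HM) as [l [Hl Hcov]].
  destruct (index_avoiding M l) as [k [Hk Hkl]]; [lia|].
  exists (slope M k). split; [apply slope_range; auto|].
  intros a Ha Ht. apply Rnot_lt_le. intro Hb. apply Hkl. eapply Hcov; eauto.
Qed.

Definition transversal (P : list point) (u : point) (eta : R) : Prop :=
  forall p q, In p P -> In q P -> p <> q -> sqd q p < 25/4 -> eta <= Rabs (dot (diff q p) u).

Lemma close_diffs_transversal P u eta : sep P ->
  (forall a, In a (close_diffs P) -> tight a -> eta <= Rabs (dot a u)) -> transversal P u eta.
Proof.
  intros Hs Hgood p q Hp Hq Hne Hc. apply Hgood; [apply close_diffs_in; auto|].
  split; [apply Hs; auto | exact Hc].
Qed.

Lemma nth_translate (l : list point) v i d : (i < length l)%nat ->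
  nth i (translate l v) d = padd (nth i l d) v.
Proof.
  intro h. unfold translate. rewrite (nth_indep _ _ (padd d v)) by (rewrite length_map; auto).
  apply (map_nth (fun p => padd p v)).
Qed.

Lemma nth_distinct (l : list point) d i j : NoDup l -> (i < length l)%nat -> (j < length l)%nat ->
  i <> j -> nth i l d <> nth j l d.
Proof. intros Hn Hi Hj Hne He. apply Hne. eapply (proj1 (NoDup_nth l d)); eauto. Qed.

Lemma dot_diff q p u : dot (diff q p) u = dot q u - dot p u.
Proof. unfold dot, diff; simpl. ring. Qed.

Lemma behind_of_key P u eta p q : sep P -> transversal P u eta -> In p P -> In q P -> p <> q ->
  dot q u <= dot p u -> behind (diff q p) u eta.
Proof.
  intros Hs Htr Hp Hq Hne Hkey.
  assert (Hd : dot (diff q p) u <= 0) by (rewrite dot_diff; lra).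
  split; [apply Hs; auto|]. split; [exact Hd|].
  intro Hc. pose proof (Htr p q Hp Hq Hne Hc) as He.
  rewrite Rabs_left1 in He; lra.
Qed.

Section SortedMatching.

Variables (S T : list point) (u : point) (L eta R0 : R).
Hypotheses (NdS : NoDup S) (NdT : NoDup T) (SpS : sep S) (SpT : sep T).
Hypothesis same_size : length S = length T.
Hypotheses (Hu : 1 <= nsq u) (HR0 : 0 <= R0) (HLeta : 5/2 * R0 <= L * eta) (HL : 3 * R0 <= L).
Hypothesis close_ST : forall s t, In s S -> In t T -> sqd t s <= R0 * R0.
Hypotheses (TrS : transversal S u eta) (TrT : transversal T u eta).

Lemma sorted_matching_feasible : feasible S (translate T (pscale L u)).
Proof.
  destruct (sort_by_key (fun p => dot p u) S) as [ord [PS Sto]].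
  destruct (sort_by_key (fun p => dot p u) T) as [tgs [PT Stt]].
  pose proof (Permutation_length PS) as Lo. pose proof (Permutation_length PT) as Lt.
  assert (Ndo : NoDup ord) by (apply (Permutation_NoDup (Permutation_sym PS)); auto).
  assert (Ndt : NoDup tgs) by (apply (Permutation_NoDup (Permutation_sym PT)); auto).
  assert (InS : forall i, (i < length ord)%nat -> In (nth i ord (0,0)) S)
    by (intros i Hi; apply (Permutation_in _ PS), nth_In; auto).
  assert (InT : forall i, (i < length ord)%nat -> In (nth i tgs (0,0)) T)
    by (intros i Hi; apply (Permutation_in _ PT), nth_In; lia).
  exists ord, (translate tgs (pscale L u)).
  split; [exact PS|]. split; [apply Permutation_map; exact PT|].
  split; [unfold translate; rewrite length_map; lia|].
  intros i Hi. rewrite nth_translate by lia.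
  assert (Hw : sqd (nth i tgs (0,0)) (nth i ord (0,0)) <= R0 * R0) by auto.
  split.
  - intros j Hj. apply sweep_misses_start with eta R0; auto.
    apply behind_of_key with S; try (apply InS; lia).
    + exact SpS.
    + exact TrS.
    + apply nth_distinct; auto; lia.
    + apply (sorted_nth (fun p => dot p u)); auto.
  - intros j Hj. rewrite nth_translate by lia. apply sweep_misses_target with eta R0; auto.
    apply behind_of_key with T; try (apply InT; lia).
    + exact SpT.
    + exact TrT.
    + apply nth_distinct; auto; lia.
    + apply (sorted_nth (fun p => dot p u)); auto; lia.
Qed.

End SortedMatching.

Lemma r_le P rho : P <> nil -> (exists c, forall p, In p P -> dist2 p c <= rho) -> r P <= rho.
Proof.
  intros HP Hc. unfold r.
  set (E := fun rho0 => exists c : point, forall p, In p P -> dist2 p c <= rho0).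
  destruct (Glb_Rbar_correct E) as [Hlb Hgr].
  assert (h1 : Rbar_le (Glb_Rbar E) rho) by (apply Hlb; exact Hc).
  assert (h2 : Rbar_le 0 (Glb_Rbar E)).
  { apply Hgr. intros x [c Hx]. destruct P as [|p0 P']; [congruence|].
    specialize (Hx p0 (or_introl eq_refl)). simpl. pose proof (dist2_nn p0 c). lra. }
  destruct (Glb_Rbar E); simpl in *; auto; try contradiction.
Qed.

Lemma r_nonneg P c : P <> nil -> sed_center P c -> 0 <= r P.
Proof.
  intros HP Hc. destruct P as [|p0 P']; [congruence|].
  pose proof (Hc p0 (or_introl eq_refl)). pose proof (dist2_nn p0 c). lra.
Qed.

Lemma sed_center_close S T c s t : sed_center S c -> sed_center T c -> In s S -> In t T ->
  sqd t s <= (r S + r T) * (r S + r T).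
Proof.
  intros HcS HcT Hs Ht. apply sqd_le_of_dist.
  pose proof (dist2_tri t c s). rewrite (dist2_sym c s) in *.
  pose proof (HcS s Hs). pose proof (HcT t Ht). lra.
Qed.

Lemma dist2_padd t v c : dist2 (padd t v) c <= dist2 t c + norm2 v.
Proof.
  pose proof (dist2_tri (padd t v) t c).
  assert (dist2 (padd t v) t = norm2 v) by (unfold norm2, dist2, padd; simpl; f_equal; ring).
  lra.
Qed.

Lemma r_union_translate S T c v : S <> nil -> T <> nil -> sed_center S c -> sed_center T c ->
  r (S ++ translate T v) <= r S + r T + norm2 v.
Proof.
  intros HS HT HcS HcT. pose proof (r_nonneg S c HS HcS). pose proof (r_nonneg T c HT HcT).
  pose proof (dist2_nn v (0,0)).
  apply r_le; [destruct S; [congruence | discriminate]|].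
  exists c. intros p Hp. apply in_app_or in Hp as [Hp|Hp].
  - pose proof (HcS p Hp). unfold norm2. lra.
  - unfold translate in Hp. apply in_map_iff in Hp as [t [<- Ht]].
    pose proof (dist2_padd t v c). pose proof (HcT t Ht). lra.
Qed.

Lemma norm2_slope L m : 0 <= L -> 0 <= m <= 1 -> norm2 (pscale L (1, m)) <= 2 * L.
Proof.
  intros HL Hm. unfold norm2, dist2, pscale; simpl.
  rewrite <- (sqrt_square (2 * L)) by lra. apply sqrt_le_1_alt.
  assert (0 <= L * m <= L) by (split; nra).
  nra.
Qed.

(** The theorem, with C = 400: take M = 32 n candidate slopes, translation length
    L = 160 (r S + r T) n, and margin eta = 1 / (2 M), so that L eta = 5/2 (r S + r T). *)

Theorem mainTheorem7 :
  exists C : R, 0 < C /\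
    forall (n : nat) (S T : list point),
      (2 <= n)%nat -> length S = n -> length T = n ->
      valid S -> valid T ->
      (exists c : point, sed_center S c /\ sed_center T c) ->
      exists v : point,
        feasible S (translate T v) /\
        norm2 v <= C * (r S + r T) * INR n /\
        r (S ++ translate T v) <= C * (r S + r T) * INR n.
Proof.
  exists 400. split; [lra|].
  intros n S T Hn HlS HlT HvS HvT [c [HcS HcT]].
  destruct (valid_props S HvS) as [NdS SpS]. destruct (valid_props T HvT) as [NdT SpT].
  assert (HS : S <> nil) by (intros ->; simpl in HlS; lia).
  assert (HT : T <> nil) by (intros ->; simpl in HlT; lia).
  pose proof (r_nonneg S c HS HcS). pose proof (r_nonneg T c HT HcT).
  assert (HnR : 2 <= INR n) by (apply (le_INR 2); auto).
  set (R0 := r S + r T). set (M := (32 * n)%nat). set (L := 160 * R0 * INR n).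
  assert (HMn : INR M = 32 * INR n) by (unfold M; rewrite mult_INR; simpl; ring).
  destruct (good_slope (close_diffs S ++ close_diffs T) M) as [m [Hm Hgood]]; [unfold M; lia|..].
  { pose proof (close_diffs_length S NdS SpS). pose proof (close_diffs_length T NdT SpT).
    rewrite length_app. unfold M. lia. }
  assert (HL : 0 <= L) by (unfold L, R0; nra).
  pose proof (norm2_slope L m HL Hm).
  exists (pscale L (1, m)). split; [|split].
  - apply sorted_matching_feasible with (1 / (2 * INR M)) R0; auto.
    + lia.
    + unfold nsq, dot; simpl. nra.
    + unfold R0; lra.
    + unfold L. rewrite HMn. right. field. lra.
    + unfold L, R0; nra.
    + intros s t Hs Ht. apply sed_center_close with c; auto.
    + apply close_diffs_transversal; auto. intros a Ha. apply Hgood, in_or_app; auto.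
    + apply close_diffs_transversal; auto. intros a Ha. apply Hgood, in_or_app; auto.
  - unfold L in *. nra.
  - pose proof (r_union_translate S T c (pscale L (1, m)) HS HT HcS HcT) as Hr.
    fold R0 in Hr. unfold L in *. nra.
Qed.
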